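(* Let $n\in\mathbb N$ and let $A$ be a connected monounary algebra containing an $n$-element cycle. If $A\not\cong\underline n$ and $A^{(\infty)}=A$, then $\mathbf V(A)=\mathbf V(\widehat n)$.
   Context: A monounary algebra is a pair $(A,f)$ with $A$ a nonempty set and $f:A\to A$; direct products are coordinatewise. It is connected if for all $x,y$ there are $m,n\ge0$ with $f^m(x)=f^n(y)$; an $n$-element cycle is a set $\{x,f(x),\dots,f^{n-1}(x)\}$ of $n$ distinct elements with $f^n(x)=x$. A retract of $A$ is a nonempty subalgebra $M$ such that there is an endomorphism $h:A\to M$ with $h|_M=\mathrm{id}$. A retract variety is a class closed under isomorphisms, retracts and direct products; $\mathbf V(\mathcal K)$ is the smallest retract variety containing $\mathcal K$. $A^{(\infty)}$ is the set of $x\in A$ admitting a sequence $x_0=x,x_1,\dots$ in $A$ with $f(x_n)=x_{n-1}$ for all $n\ge1$. $\underline n=(\mathbb Z_n,k\mapsto k+1\bmod n)$; $\widehat n$ has universe $\mathbb Z_n\cup\{(k,1):k\in\mathbb N\}$ with $f(k)=k+1\bmod n$ on $\mathbb Z_n$, $f((k,1))=(k-1,1)$ for $k>1$, $f((1,1))=0$. *)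

From mathcomp Require Import all_boot.
Set Implicit Arguments. Unset Strict Implicit. Unset Printing Implicit Defensive.

(* Monounary algebras (A, f).  Nonemptiness is imposed where the paper needs
   it: every member of a retract variety is required to be nonempty. *)
Record mua := Mua { car : Type; op : car -> car }.
Arguments op : clear implicits.

Definition hom (A B : mua) (h : car A -> car B) : Prop :=
  forall x, h (op A x) = op B (h x).

Definition iso (A B : mua) : Prop :=
  exists h : car A -> car B, hom h /\ bijective h.

Definition sub_mua (A : mua) (P : car A -> Prop)
  (HP : forall x, P x -> P (op A x)) : mua :=
  @Mua {x : car A | P x} (fun x => exist P (op A (proj1_sig x)) (HP _ (proj2_sig x))).

Definition prod_mua (I : Type) (F : I -> mua) : mua :=
  @Mua (forall i, car (F i)) (fun x i => op (F i) (x i)).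

Definition is_retract (A : mua) (P : car A -> Prop) : Prop :=
  (exists x, P x) /\ (forall x, P x -> P (op A x)) /\
  exists h : car A -> car A, hom (A:=A) (B:=A) h /\ (forall x, P (h x)) /\
                             (forall x, P x -> h x = x).

Definition retract_variety (K : mua -> Prop) : Prop :=
  [/\ forall A, K A -> inhabited (car A),
      forall A B, K A -> iso A B -> K B,
      forall A (P : car A -> Prop) (HP : forall x, P x -> P (op A x)),
        K A -> is_retract P -> K (sub_mua HP)
    & forall (I : Type) (F : I -> mua), (forall i, K (F i)) -> K (prod_mua F)].

Definition V (A : mua) (B : mua) : Prop :=
  forall K, retract_variety K -> K A -> K B.

Definition connected (A : mua) : Prop :=
  forall x y : car A, exists m k, iter m (op A) x = iter k (op A) y.

Definition has_cycle (A : mua) (n : nat) : Prop :=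
  exists x : car A, iter n (op A) x = x /\
    forall i j, i < j -> j < n -> iter i (op A) x <> iter j (op A) x.

Definition inf_part (A : mua) (x : car A) : Prop :=
  exists s : nat -> car A, s 0 = x /\ forall k, op A (s k.+1) = s k.

Definition cyc (n : nat) : mua := @Mua 'I_n (@ordS n).

(* hat n : Z_n plus a ray; inr k stands for (k+1,1) *)
Definition hat_op (n : nat) (Hn : 0 < n) (x : 'I_n + nat) : 'I_n + nat :=
  match x with
  | inl i => inl (ordS i)
  | inr 0 => inl (Ordinal Hn)
  | inr k.+1 => inr k
  end.

Definition hat (n : nat) (Hn : 0 < n) : mua := @Mua ('I_n + nat)%type (hat_op Hn).

From mathcomp Require Import all_boot.
From Stdlib Require Import ClassicalEpsilon FunctionalExtensionality ProofIrrelevance.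
Set Implicit Arguments. Unset Strict Implicit. Unset Printing Implicit Defensive.

(* [V A = V (hat n)] amounts to [K A -> K (hat n)] and [K (hat n) -> K A] for every
   retract variety [K], and both follow from one retraction principle: if [e] embeds
   [C] into [B], the operation of [C] is surjective and some homomorphism [B -> C]
   exists, then [C] is a retract of [B].  The retraction sends a point whose orbit
   first meets the image of [e] after [k] steps to a [k]-fold preimage of the
   entry point, and follows the given homomorphism elsewhere.
   Choosing [x] off the n-cycle with [f x] on it and a backward chain from [x]
   embeds [hat n] into [A].  Conversely [A] embeds into a power of [hat n]: the
   homomorphisms [A -> hat n] that send the orbit of a point [i] onto the cycle and
   every other point onto the ray according to its entry depth into that orbit
   separate the points of [A]. *)

Lemma least_witness (P : nat -> Prop) :
  (exists k, P k) -> exists k, P k /\ forall j, j < k -> ~ P j.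
Proof.
move=> [k Pk]; apply: NNPP => noleast.
suff below : forall m j, j < m -> ~ P j by exact: (below k.+1 k (ltnSn k)).
elim=> // m IH j; rewrite ltnS leq_eqVlt => /orP[/eqP-> | /IH //] Pm.
by apply: noleast; exists m.
Qed.

Lemma least_witness_unique (P : nat -> Prop) k k' :
  P k -> (forall j, j < k -> ~ P j) -> P k' -> (forall j, j < k' -> ~ P j) -> k = k'.
Proof.
move=> Pk min_k Pk' min_k'.
by case: (ltngtP k k') => // [/min_k'|/min_k]; [case|case].
Qed.

Lemma iter_mod (T : Type) (h : T -> T) n a m :
  iter n h a = a -> iter m h a = iter (m %% n) h a.
Proof.
move=> per; rewrite {1}(divn_eq m n) addnC iterD iterM.
by rewrite (iter_fix _ per).
Qed.

Lemma hom_iter (X Y : mua) (h : car X -> car Y) m x :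
  hom h -> h (iter m (op X) x) = iter m (op Y) (h x).
Proof. by move=> h_hom; elim: m => //= m IH; rewrite h_hom IH. Qed.

Lemma val_iter_ordS n (j : 'I_n) m : val (iter m (@ordS n) j) = (j + m) %% n.
Proof.
elim: m => [|m IH] /=; first by rewrite addn0 modn_small.
by rewrite IH -addn1 modnDml addn1 addnS.
Qed.

Lemma iter_ordS_fixed n (j : 'I_n) m : iter m (@ordS n) j = j -> m %% n = 0.
Proof.
move/(congr1 val); rewrite val_iter_ordS => E.
have /eqP : j + m = j + 0 %[mod n] by rewrite E addn0 modn_small.
by rewrite eqn_modDl mod0n => /eqP.
Qed.

Lemma inf_part_op_surj (A : mua) :
  (forall y : car A, inf_part y) -> forall y, exists x, op A x = y.
Proof. by move=> A_inf y; have [s [s0 sS]] := A_inf y; exists (s 1); rewrite sS. Qed.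

Lemma retract_variety_cancel K (A B : mua) (e : car B -> car A) (p : car A -> car B) :
  retract_variety K -> K A -> hom e -> hom p -> cancel e p -> K B.
Proof.
case=> K_ne K_iso K_ret _ KA e_hom p_hom eK.
pose P y := exists x, y = e x.
have P_closed y : P y -> P (op A y) by case=> x ->; exists (op B x); rewrite e_hom.
have K_im : K (sub_mua P_closed).
  apply: K_ret => //; split.
    by case: (K_ne _ KA) => a; exists (e (p a)), (p a).
  split=> //; exists (fun y => e (p y)); split; first by move=> y; rewrite p_hom e_hom.
  by split=> [y|_ [x ->]]; [exists (p y) | rewrite eK].
apply: (K_iso _ _ K_im); exists (fun y => p (proj1_sig y)); split.
  by case=> y Py /=; rewrite p_hom.
exists (fun x => exist P (e x) (ex_intro _ x erefl)); last by move=> x /=; rewrite eK.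
case=> y Py; apply: eq_sig_hprop => [? ? ?|/=]; first exact: proof_irrelevance.
by case: Py => x ->; rewrite eK.
Qed.

Section Extension.
Variables (B C : mua) (S : car B -> Prop) (q : car B -> car C).
Variables (pre : car C -> car C) (g : car B -> car C).
Hypothesis S_closed : forall b, S b -> S (op B b).
Hypothesis q_hom : forall b, S b -> q (op B b) = op C (q b).
Hypothesis preK : cancel pre (op C).
Hypothesis g_hom_off :
  forall b, (forall k, ~ S (iter k (op B) b)) -> g (op B b) = op C (g b).

Definition first_hit (b : car B) (k : nat) :=
  S (iter k (op B) b) /\ forall j, j < k -> ~ S (iter j (op B) b).

Definition depth (b : car B) := epsilon (inhabits 0) (first_hit b).

Definition extend (b : car B) : car C :=
  if excluded_middle_informative (exists k, S (iter k (op B) b))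
  then iter (depth b) pre (q (iter (depth b) (op B) b)) else g b.

Lemma depthE b k : first_hit b k -> depth b = k.
Proof.
move=> [Sk min_k]; have [Sd min_d] : first_hit b (depth b).
  by apply: epsilon_spec; exact: least_witness (ex_intro _ k Sk).
exact: least_witness_unique Sd min_d Sk min_k.
Qed.

Lemma extendE b k : first_hit b k -> extend b = iter k pre (q (iter k (op B) b)).
Proof.
move=> hit; rewrite /extend -(depthE hit).
by case: excluded_middle_informative => // [[]]; exists k; case: hit.
Qed.

Lemma extend_off b : (forall k, ~ S (iter k (op B) b)) -> extend b = g b.
Proof.
move=> off; rewrite /extend.
by case: excluded_middle_informative => // [[k Sk]]; case: (off k).
Qed.

Lemma extend_on b : S b -> extend b = q b.
Proof. by move=> Sb; rewrite (@extendE b 0). Qed.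

Lemma extend_hom : hom extend.
Proof.
move=> b; case: (excluded_middle_informative (exists k, S (iter k (op B) b))) => [hits|off].
  have [[|k] [Sk min_k]] := least_witness hits.
    by rewrite !extend_on ?q_hom //; apply: S_closed.
  have hit_fb : first_hit (op B b) k.
    by split=> [|j jk]; rewrite -iterSr //; apply: min_k.
  by rewrite (extendE hit_fb) (@extendE b k.+1) // iterS preK iterSr.
have off' k : ~ S (iter k (op B) b) by move=> Sk; apply: off; exists k.
rewrite !extend_off ?g_hom_off // => k; rewrite -iterSr; exact: off'.
Qed.

End Extension.

Section Retraction.
Variables (B C : mua) (e : car C -> car B) (g : car B -> car C).
Hypotheses (e_hom : hom e) (e_inj : injective e).
Hypothesis op_surj : forall y, exists x, op C x = y.
Hypothesis g_hom_off :
  forall b, (forall k, ~ exists z, iter k (op B) b = e z) -> g (op B b) = op C (g b).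

Lemma retraction_exists : exists p : car B -> car C, hom p /\ cancel e p.
Proof.
pose pre y := epsilon (inhabits y) (fun x => op C x = y).
have preK : cancel pre (op C) by move=> y; exact: (epsilon_spec (inhabits y) _ (op_surj y)).
pose e_inv b := epsilon (inhabits (g b)) (fun z => e z = b).
have e_invK : cancel e e_inv.
  move=> z; apply: e_inj; rewrite /e_inv.
  exact: (epsilon_spec (inhabits (g (e z))) (fun z' => e z' = e z) (ex_intro _ z erefl)).
pose S b := exists z, b = e z.
exists (extend S e_inv pre g); split.
  apply: extend_hom => // [b [z ->]|b [z ->]].
  - by exists (op C z); rewrite e_hom.
  - by rewrite -e_hom !e_invK.
by move=> z; rewrite extend_on ?e_invK //; exists z.
Qed.

End Retraction.

Lemma retract_variety_embedding K (B C : mua) (e : car C -> car B) (g : car B -> car C) :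
  retract_variety K -> K B -> hom e -> injective e ->
  (forall y, exists x, op C x = y) -> hom g -> K C.
Proof.
move=> RK KB e_hom e_inj op_surj g_hom.
have [p [p_hom eK]] := retraction_exists e_hom e_inj op_surj (fun b _ => g_hom b).
exact: retract_variety_cancel RK KB e_hom p_hom eK.
Qed.

Lemma V_eq_of_mutual (A B : mua) :
  (forall K, retract_variety K -> K A -> K B) ->
  (forall K, retract_variety K -> K B -> K A) ->
  forall C, V A C <-> V B C.
Proof. by move=> AB BA C; split=> VC K RK KX; apply: VC => //; [apply: BA | apply: AB]. Qed.

Section Hat.
Variables (n : nat) (n_gt0 : 0 < n).
Local Notation o0 := (Ordinal n_gt0).

Definition hat_pre (z : 'I_n + nat) : 'I_n + nat :=
  match z with
  | inl j => if j == o0 then inr 0 else inl (ord_pred j)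
  | inr k => inr k.+1
  end.

Lemma hat_preK : cancel hat_pre (hat_op n_gt0).
Proof. by case=> [j|k] //=; case: eqP => [->|_] //=; rewrite ord_predK. Qed.

Lemma hat_op_surj (z : 'I_n + nat) : exists y, hat_op n_gt0 y = z.
Proof. by exists (hat_pre z); apply: hat_preK. Qed.

Lemma iter_hat_pre k : iter k.+1 hat_pre (inl o0) = inr k.
Proof. by elim: k => [|k IH]; rewrite iterS ?IH //= eqxx. Qed.

End Hat.

Section Cycle.
Variables (A : mua) (n : nat) (xc : car A).
Hypothesis n_gt0 : 0 < n.
Hypothesis xc_period : iter n (op A) xc = xc.
Hypothesis xc_distinct :
  forall i j, i < j -> j < n -> iter i (op A) xc <> iter j (op A) xc.
Hypothesis A_connected : connected A.
Local Notation f := (op A).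
Local Notation o0 := (Ordinal n_gt0).

Definition on_cycle (y : car A) := exists j, y = iter j f xc.

Definition cycle_emb (j : 'I_n) : car A := iter j f xc.

Lemma on_cycle_iter k y : on_cycle y -> on_cycle (iter k f y).
Proof. by case=> j ->; exists (k + j); rewrite iterD. Qed.

Lemma on_cycle_period y : on_cycle y -> iter n f y = y.
Proof. by case=> j ->; rewrite -iterD addnC iterD xc_period. Qed.

Lemma iter_cycle_eq j j' : iter j f xc = iter j' f xc -> j = j' %[mod n].
Proof.
rewrite (iter_mod j xc_period) (iter_mod j' xc_period).
move=> E; case: (ltngtP (j %% n) (j' %% n)) => // lt.
  by case: (xc_distinct lt (ltn_pmod _ n_gt0) E).
by case: (xc_distinct lt (ltn_pmod _ n_gt0) (esym E)).
Qed.

Lemma periodic_on_cycle a m : 0 < m -> iter m f a = a -> on_cycle a.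
Proof.
move=> m_gt0 per; case: (A_connected a xc) => u [v Euv].
have le_u : u <= u * m by rewrite leq_pmulr.
exists (u * m - u + v).
by rewrite iterD -Euv -iterD subnK // iterM (iter_fix _ per).
Qed.

Lemma cycle_emb_hom : hom (A := cyc n) cycle_emb.
Proof. by move=> j; rewrite /cycle_emb /= -iterS (iter_mod j.+1 xc_period). Qed.

Lemma cycle_emb_inj : injective cycle_emb.
Proof. by move=> j j' /iter_cycle_eq; rewrite !modn_small // => /val_inj. Qed.

Lemma cycle_retraction :
  exists p : car A -> 'I_n, hom (B := cyc n) p /\ cancel cycle_emb p.
Proof.
apply: (@retraction_exists A (cyc n) _ (fun _ => o0) cycle_emb_hom cycle_emb_inj).
  by move=> j; exists (ord_pred j); apply: ord_predK.
move=> b off; case: (A_connected b xc) => u [v Euv]; case: (off u).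
by exists (Ordinal (ltn_pmod v n_gt0)); rewrite Euv /cycle_emb /= -iter_mod.
Qed.

Section Projection.
Variable p : car A -> 'I_n.
Hypotheses (p_hom : hom (B := cyc n) p) (cycle_embK : cancel cycle_emb p).

Lemma on_cycleK y : on_cycle y -> cycle_emb (p y) = y.
Proof.
case=> j ->; have -> : iter j f xc = cycle_emb (Ordinal (ltn_pmod j n_gt0)).
  by rewrite /cycle_emb /= -iter_mod.
by rewrite cycle_embK.
Qed.

Lemma cycle_entry_exists : ~ iso A (cyc n) -> exists x, ~ on_cycle x /\ on_cycle (f x).
Proof.
move=> not_iso; have [y y_off] : exists y, ~ on_cycle y.
  apply: NNPP => all_on; apply: not_iso; exists p; split=> //; exists cycle_emb => // y.
  by apply: on_cycleK; apply: NNPP => y_off; apply: all_on; exists y.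
have [|[|k] [hit min_k]] := @least_witness (fun k => on_cycle (iter k f y)) _.
- by case: (A_connected y xc) => u [v E]; exists u, v.
- by [].
- by exists (iter k f y); split; [apply: min_k | rewrite -iterS].
Qed.

(* Rotating by [s] until the entry point of [b] into the orbit of [i] lands on
   [0] sends [b] onto the ray; this is how these maps detect orbit membership. *)
Definition hat_proj (i : car A) (s : nat) : car A -> 'I_n + nat :=
  @extend A (hat n_gt0) (fun y => exists m, y = iter m f i)
    (fun y => inl (iter s (@ordS n) (p y))) (hat_pre n_gt0) (fun _ => inl o0).

Lemma hat_proj_hom i s : hom (B := hat n_gt0) (hat_proj i s).
Proof.
apply: extend_hom => [y [m ->]|y _||b off].
- by exists m.+1.
- by rewrite p_hom -iterSr.
- exact: hat_preK.
- by case: (A_connected b i) => u [v E]; case: (off u); exists v.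
Qed.

Lemma hat_proj_orbit i s y :
  (exists m, y = iter m f i) -> hat_proj i s y = inl (iter s (@ordS n) (p y)).
Proof. by move=> orbit_y; rewrite /hat_proj extend_on. Qed.

Lemma hat_proj_sep_orbit a b :
  (forall s, hat_proj a s a = hat_proj a s b) -> exists m, b = iter m f a.
Proof.
move=> same.
have [|[|k] [hit min_k]] := @least_witness (fun k => exists m, iter k f b = iter m f a) _.
- by case: (A_connected b a) => u [v E]; exists u, v.
- by case: hit => m E; exists m.
pose j := p (iter k.+1 f b).
have rot : iter (n - j) (@ordS n) j = o0.
  by apply: val_inj; rewrite /= val_iter_ordS subnKC ?modnn // ltnW.
have := same (n - j); rewrite hat_proj_orbit; last by exists 0.
by rewrite /hat_proj (@extendE _ _ _ _ _ _ b k.+1) // -/j rot iter_hat_pre.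
Qed.

Lemma hat_proj_sep a b : (forall i s, hat_proj i s a = hat_proj i s b) -> a = b.
Proof.
move=> same.
have [m b_def] := hat_proj_sep_orbit (same a).
have [m' a_def] := hat_proj_sep_orbit (fun s => esym (same b s)).
case: m b_def => [->//|m] b_def.
have a_on : on_cycle a.
  apply: (@periodic_on_cycle a (m' + m.+1)); first by rewrite addnS.
  by rewrite iterD -b_def -a_def.
have := same a 0; rewrite !hat_proj_orbit; [|by exists m.+1|by exists 0].
rewrite b_def (hom_iter _ _ p_hom); case=> E.
have m_mod : m.+1 %% n = 0 by apply: (@iter_ordS_fixed _ (p a)); rewrite iterS -E.
by rewrite (iter_mod _ (on_cycle_period a_on)) m_mod.
Qed.

Section HatEmbedding.
Variables (x : car A) (s : nat -> car A).
Hypotheses (x_off : ~ on_cycle x) (fx_on : on_cycle (f x)).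
Hypotheses (s0 : s 0 = x) (sS : forall k, f (s k.+1) = s k).

Definition hat_emb (z : 'I_n + nat) : car A :=
  match z with inl j => iter j f (f x) | inr k => s k end.

Lemma hat_emb_hom : hom (A := hat n_gt0) hat_emb.
Proof.
case=> [j|[|k]] //=; last by rewrite s0.
by rewrite -iterS (iter_mod j.+1 (on_cycle_period fx_on)).
Qed.

Lemma iter_s k d : iter k f (s (k + d)) = s d.
Proof. by elim: k => //= k IH; rewrite -iterS iterSr addSn sS IH. Qed.

Lemma s_off k : ~ on_cycle (s k).
Proof. by move/(on_cycle_iter k); rewrite -{2}[k]addn0 iter_s s0. Qed.

Lemma hat_emb_inj : injective hat_emb.
Proof.
case=> [j|k] [j'|k'] /= E.
- case: fx_on E => t ->; rewrite -!iterD => /iter_cycle_eq /eqP.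
  by rewrite eqn_modDr !modn_small // => /eqP/val_inj->.
- by case: (@s_off k'); rewrite -E; apply: on_cycle_iter.
- by case: (@s_off k); rewrite E; apply: on_cycle_iter.
wlog lt : k k' E / k < k'.
  move=> W; case: (ltngtP k k') => [lt|lt|->] //; first exact: W.
  by rewrite (W k' k (esym E) lt).
have per : iter (k' - k) f (s k') = s k'.
  by rewrite -{2}E -(iter_s (k' - k) k) subnK // ltnW.
by case: (@s_off k'); apply: periodic_on_cycle per; rewrite subn_gt0.
Qed.

Lemma hat_in_retract_variety K : retract_variety K -> K A -> K (hat n_gt0).
Proof.
move=> RK KA; apply: (retract_variety_embedding RK KA hat_emb_hom hat_emb_inj).
  exact: hat_op_surj.
exact: hat_proj_hom xc 0.
Qed.

Lemma A_in_retract_variety (A_inf : forall y : car A, inf_part y) K :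
  retract_variety K -> K (hat n_gt0) -> K A.
Proof.
move=> RK Khat.
pose pow := prod_mua (fun _ : car A * nat => hat n_gt0).
have Kpow : K pow by case: RK => _ _ _; apply.
pose e y (i : car A * nat) := hat_proj i.1 i.2 y.
apply: (@retract_variety_embedding K pow A e (fun t => hat_emb (t (xc, 0))) RK Kpow).
- by move=> y; apply: functional_extensionality => i; apply: hat_proj_hom.
- by move=> y y' E; apply: hat_proj_sep => i s'; apply: (congr1 (fun t => t (i, s')) E).
- exact: inf_part_op_surj.
- by move=> t; apply: hat_emb_hom.
Qed.

End HatEmbedding.
End Projection.
End Cycle.

Theorem lemma4p2 (n : nat) (Hn : 0 < n) (A : mua) :
  inhabited (car A) -> connected A -> has_cycle A n ->
  ~ iso A (cyc n) -> (forall x : car A, inf_part x) ->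
  forall B : mua, V A B <-> V (hat Hn) B.
Proof.
move=> _ A_conn [xc [xc_period xc_distinct]] not_iso A_inf.
have [p [p_hom cycle_embK]] := cycle_retraction Hn xc_period xc_distinct A_conn.
have [x [x_off fx_on]] :=
  cycle_entry_exists Hn xc_period A_conn p_hom cycle_embK not_iso.
have [s [s0 sS]] := A_inf x.
apply: V_eq_of_mutual => K RK KX.
- exact: (hat_in_retract_variety Hn xc_period xc_distinct A_conn p_hom
           x_off fx_on s0 sS RK KX).
- exact: (A_in_retract_variety xc_period A_conn p_hom fx_on s0 sS A_inf RK KX).
Qed.
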